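(* Under the standing assumptions below, let $k\in P$ and let $x\in D_k$ be decomposable. Then $x$ can be written in terms of indecomposable elements: there exist finitely many $\ell_1,\dots,\ell_n\in P$ with $\ell_i<k$ and indecomposable elements $x_i\in M_{\ell_i}$ (i.e. $x_i\in M_{\ell_i}\setminus D_{\ell_i}$) such that $x=\sum_{i=1}^n t^{\,k-\ell_i}x_i$.
   Context: Standing assumptions: $R$ is a principal ideal domain; $P$ is a lattice with a compatible abelian group structure ($(P,+,0)$ abelian group, $a\le b\Rightarrow a+c\le b+c$). $U_0=\{s\in P:s\ge 0\}$, $R[U_0]$ the monoid ring (finite sums $\sum c_st^s$, $c_s\in R$), graded by $\deg(ct^s)=s$. $M=\bigoplus_{a\in P}M_a$ is a $P$-graded $R[U_0]$-module (persistence module) that is graded projective, with each $M_a$ a finitely generated $R$-module. For $r\in P$, $D_r=\sum_{q<r}t^{\,r-q}M_q\subseteq M_r$ (sum of the images of structure maps from degrees $q<r$). An element $x\in M_r$ is decomposable if $x\in D_r$ and indecomposable if $x\in M_r\setminus D_r$. *)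

From HB Require Import structures.
From mathcomp Require Import all_boot all_order all_algebra.
Set Implicit Arguments. Unset Strict Implicit. Unset Printing Implicit Defensive.
Import GRing.Theory.
Local Open Scope ring_scope.

Definition is_ideal (R : idomainType) (I : R -> Prop) : Prop :=
  [/\ I 0, (forall x y, I x -> I y -> I (x + y)) & (forall r x, I x -> I (r * x))].

Definition PID (R : idomainType) : Prop :=
  forall I : R -> Prop, is_ideal I -> exists a : R, forall x, I x <-> exists r, x = r * a.

Definition lattice_ordered_group (P : zmodType) (le : rel P) : Prop :=
  (forall a, le a a) /\
  (forall a b, le a b -> le b a -> a = b) /\
  (forall a b c, le a b -> le b c -> le a c) /\
  (forall a b, exists j, le a j /\ le b j /\ forall u, le a u -> le b u -> le j u) /\
  (forall a b, exists m, le m a /\ le m b /\ forall u, le u a -> le u b -> le u m) /\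
  (forall a b c, le a b -> le (a + c) (b + c)).

(** A P-graded R[U_0]-module, presented (equivalently) as a persistence module:
    R-modules M_a for a : P and R-linear structure maps M_a -> M_b for a <= b
    (the action of t^(b-a)), satisfying t^0 = id and t^s t^r = t^(r+s). *)
Record pmod (R : nzRingType) (P : Type) (le : rel P) := PMod {
  obj :> P -> lmodType R;
  smap : forall a b, le a b -> obj a -> obj b;
  smap_linear : forall a b (h : le a b) (c : R) (x y : obj a),
      smap h (c *: x + y) = c *: smap h x + smap h y;
  smap_id : forall a (h : le a a) (x : obj a), smap h x = x;
  smap_comp : forall a b c (h1 : le a b) (h2 : le b c) (h3 : le a c) (x : obj a),
      smap h2 (smap h1 x) = smap h3 x
}.

Arguments smap {R P le} p {a b} h _.

Record phom (R : nzRingType) (P : Type) (le : rel P) (M N : pmod R le) := PHom {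
  hfun :> forall a, M a -> N a;
  hfun_linear : forall a (c : R) (x y : M a), hfun (c *: x + y) = c *: hfun x + hfun y;
  hfun_nat : forall a b (h : le a b) (x : M a),
      hfun (smap M h x) = smap N h (hfun x)
}.
Arguments hfun {R P le M N} p a _.

Definition graded_projective (R : nzRingType) (P : Type) (le : rel P) (M : pmod R le) : Prop :=
  forall (N L : pmod R le) (g : phom N L) (f : phom M L),
    (forall a (y : L a), exists x : N a, g a x = y) ->
    exists h : phom M N, forall a (x : M a), g a (h a x) = f a x.

Definition fin_gen (R : nzRingType) (V : lmodType R) : Prop :=
  exists s : seq V, forall x : V, exists c : 'I_(size s) -> R,
      x = \sum_(i < size s) c i *: s`_i.

(** x \in D_r = sum_{q < r} t^(r-q) M_q  (finite sums of images of structure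
    maps from degrees q < r, i.e. q <= r and q <> r). *)
Definition decomposable (R : nzRingType) (P : eqType) (le : rel P) (M : pmod R le)
    (r : P) (x : M r) : Prop :=
  exists (n : nat) (q : 'I_n -> P) (hle : forall i, le (q i) r) (y : forall i, M (q i)),
    (forall i, q i != r) /\ x = \sum_(i < n) smap M (hle i) (y i).

Arguments decomposable {R P le} M {r} x.

Definition indecomposable (R : nzRingType) (P : eqType) (le : rel P) (M : pmod R le)
    (r : P) (x : M r) : Prop := ~ decomposable M x.
Arguments indecomposable {R P le} M {r} x.

From HB Require Import structures.
From mathcomp Require Import all_boot all_order all_algebra.
From mathcomp Require Import boolp.
From Stdlib Require List.
Set Implicit Arguments. Unset Strict Implicit. Unset Printing Implicit Defensive.
Import GRing.Theory.
Local Open Scope ring_scope.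

(* Projectivity yields a graded section h of the surjection
   (+)_{b <= a} M_b --> M_a, (m_b)_b |-> sum_b t^(a-b) m_b, so every y in M_l
   equals sum_b t^(l-b) h(y)_b.  When y is decomposable, naturality of h kills
   the component at b = l, so y is a sum of images of elements of strictly lower
   degrees; those that are still decomposable are expanded in the same way.
   As M_k is finitely generated, the supports of h on all degrees <= k lie in
   one finite set of degrees, and the number of its elements below the current
   degree decreases along this descent. *)

Section Linearity.
Variables (R : nzRingType) (V W : lmodType R) (f : V -> W).
Hypothesis f_linear : forall c x y, f (c *: x + y) = c *: f x + f y.

Lemma linear_law0 : f 0 = 0.
Proof. by have := f_linear (-1) 0 0; rewrite scaler0 add0r scaleN1r addNr. Qed.

Lemma linear_lawD : {morph f : x y / x + y}.
Proof. by move=> x y; have := f_linear 1 x y; rewrite !scale1r. Qed.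

Lemma linear_lawZ c : {morph f : x / c *: x}.
Proof. by move=> x; rewrite -[c *: x]addr0 f_linear linear_law0 addr0. Qed.

Lemma linear_law_sum (I : Type) (r : seq I) (F : I -> V) :
  f (\sum_(i <- r) F i) = \sum_(i <- r) f (F i).
Proof. exact: (big_morph _ linear_lawD linear_law0). Qed.

End Linearity.

Section Families.
Variables (R : nzRingType) (P : eqType) (le : rel P) (M : pmod R le).

Definition fin_supp_below (a : P) (f : forall b, M b) : Prop :=
  exists s : seq P, forall b, f b != 0 -> (b \in s) && le b a.

Lemma fin_supp_below0 a : fin_supp_below a (fun b => 0).
Proof. by exists [::] => b; rewrite eqxx. Qed.

Lemma fin_supp_belowD a (f g : forall b, M b) :
  fin_supp_below a f -> fin_supp_below a g -> fin_supp_below a (fun b => f b + g b).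
Proof.
move=> [s1 h1] [s2 h2]; exists (s1 ++ s2) => b; rewrite mem_cat.
have [fb0|/h1/andP[-> ->] //] := eqVneq (f b) 0.
by rewrite fb0 add0r => /h2/andP[-> ->]; rewrite orbT.
Qed.

Lemma fin_supp_belowZ a c (f : forall b, M b) :
  fin_supp_below a f -> fin_supp_below a (fun b => c *: f b).
Proof. by move=> [s h]; exists s => b nz; apply: h; apply: contraNneq nz => ->; rewrite scaler0. Qed.

Lemma fin_supp_belowN a (f : forall b, M b) :
  fin_supp_below a f -> fin_supp_below a (fun b => - f b).
Proof. by move=> [s h]; exists s => b nz; apply: h; apply: contraNneq nz => ->; rewrite oppr0. Qed.

(* Degree a of the free cover of M: families (m_b)_{b <= a} of finite support,
   i.e. the direct sum of the M_b with b <= a. *)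
Definition fam (a : P) := {f : forall b, M b | fin_supp_below a f}.

Lemma fam_eq a (u v : fam a) : (forall b, sval u b = sval v b) -> u = v.
Proof.
by case: u v => f hf [g hg] /= e; apply: eq_exist; apply: functional_extensionality_dep.
Qed.

Section FamModule.
Variable a : P.

HB.instance Definition _ := gen_eqMixin (fam a).
HB.instance Definition _ := gen_choiceMixin (fam a).

Definition fam0 : fam a := exist _ _ (fin_supp_below0 a).
Definition fam_add (u v : fam a) : fam a :=
  exist _ _ (fin_supp_belowD (svalP u) (svalP v)).
Definition fam_opp (u : fam a) : fam a := exist _ _ (fin_supp_belowN (svalP u)).
Definition fam_scale c (u : fam a) : fam a := exist _ _ (fin_supp_belowZ c (svalP u)).

Lemma fam_addA : associative fam_add.
Proof. by move=> u v w; apply: fam_eq => b /=; rewrite addrA. Qed.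
Lemma fam_addC : commutative fam_add.
Proof. by move=> u v; apply: fam_eq => b /=; rewrite addrC. Qed.
Lemma fam_add0 : left_id fam0 fam_add.
Proof. by move=> u; apply: fam_eq => b /=; rewrite add0r. Qed.
Lemma fam_addN : left_inverse fam0 fam_opp fam_add.
Proof. by move=> u; apply: fam_eq => b /=; rewrite addNr. Qed.

HB.instance Definition _ :=
  GRing.isZmodule.Build (fam a) fam_addA fam_addC fam_add0 fam_addN.

Lemma fam_scaleA c d (u : fam a) : fam_scale c (fam_scale d u) = fam_scale (c * d) u.
Proof. by apply: fam_eq => b /=; rewrite scalerA. Qed.
Lemma fam_scale1 : left_id 1 fam_scale.
Proof. by move=> u; apply: fam_eq => b /=; rewrite scale1r. Qed.
Lemma fam_scaleDr : right_distributive fam_scale +%R.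
Proof. by move=> c u v; apply: fam_eq => b /=; rewrite scalerDr. Qed.
Lemma fam_scaleDl v : {morph fam_scale^~ v : c d / c + d}.
Proof. by move=> c d; apply: fam_eq => b /=; rewrite scalerDl. Qed.

HB.instance Definition _ :=
  GRing.Zmodule_isLmodule.Build R (fam a) fam_scaleA fam_scale1 fam_scaleDr fam_scaleDl.

Lemma sval_fam_sum (I : Type) (r : seq I) (F : I -> fam a) b :
  sval (\sum_(i <- r) F i) b = \sum_(i <- r) sval (F i) b.
Proof. exact: (big_morph (fun u : fam a => sval u b)). Qed.

End FamModule.

Definition fam_supp a (u : fam a) : seq P := undup (sval (cid (svalP u))).

Lemma fam_supp_uniq a (u : fam a) : uniq (fam_supp u).
Proof. exact: undup_uniq. Qed.

Lemma mem_fam_supp a (u : fam a) b : sval u b != 0 -> b \in fam_supp u.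
Proof. by move=> nz; rewrite mem_undup; case: cid => s /= /(_ b nz) /andP[]. Qed.

Lemma fam_supp_le a (u : fam a) b : sval u b != 0 -> le b a.
Proof. by case: (svalP u) => s hs /hs /andP[]. Qed.

End Families.

Arguments fin_supp_below {R P le} M a f.

Section FreeCover.
Variables (R : nzRingType) (P : eqType) (le : rel P) (M : pmod R le).
Hypothesis le_refl : forall a, le a a.
Hypothesis le_trans : forall a b c, le a b -> le b c -> le a c.

(* t^(a-b) m for m : M b, with the junk value 0 when b is not below a. *)
Definition push (a b : P) (m : M b) : M a :=
  match @idP (le b a) with ReflectT hba => smap M hba m | ReflectF _ => 0 end.

Lemma pushE a b (hba : le b a) (m : M b) : push a m = smap M hba m.
Proof.
rewrite /push; destruct idP as [hba'|nba]; last by rewrite hba in nba.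
by rewrite (bool_irrelevance hba' hba).
Qed.

Lemma push_out a b (m : M b) : ~~ le b a -> push a m = 0.
Proof. by move=> nba; rewrite /push; destruct idP as [hba|] => //; rewrite hba in nba. Qed.

Lemma push_linear a b c (x y : M b) : push a (c *: x + y) = c *: push a x + push a y.
Proof.
have [hba|nba] := boolP (le b a); first by rewrite !(pushE hba) smap_linear.
by rewrite !push_out // scaler0 addr0.
Qed.

Lemma push0 a b : push a (0 : M b) = 0.
Proof. exact/linear_law0/push_linear. Qed.

Lemma push_sum a b (I : Type) (r : seq I) (F : I -> M b) :
  push a (\sum_(i <- r) F i) = \sum_(i <- r) push a (F i).
Proof. exact/linear_law_sum/push_linear. Qed.

Lemma push_comp a b c (m : M c) : le c b -> le b a -> push a (push b m) = push a m.
Proof.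
move=> hcb hba; rewrite (pushE hcb) (pushE hba) (pushE (le_trans hcb hba)).
exact: smap_comp.
Qed.

Lemma fin_supp_below_le a c (hac : le a c) (f : forall b, M b) :
  fin_supp_below M a f -> fin_supp_below M c f.
Proof. by move=> [s hs]; exists s => b /hs /andP[-> hba]; exact: le_trans hba hac. Qed.

Definition fam_incl a c (hac : le a c) (u : fam M a) : fam M c :=
  exist _ (sval u) (fin_supp_below_le hac (svalP u)).

Definition fam_pmod : pmod R le.
Proof.
refine (@PMod R P le (fun a => fam M a : lmodType R) fam_incl _ _ _).
- by move=> a b hab c x y; apply: fam_eq.
- by move=> a haa x; apply: fam_eq.
- by move=> a b c hab hbc hac x; apply: fam_eq.
Defined.

Definition fam_eval a (u : fam M a) : M a := \sum_(b <- fam_supp u) push a (sval u b).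

Lemma fam_evalE a (u : fam M a) (s : seq P) :
  uniq s -> (forall b, sval u b != 0 -> b \in s) ->
  fam_eval u = \sum_(b <- s) push a (sval u b).
Proof.
have nz_sum (r : seq P) : \sum_(b <- r) push a (sval u b) =
    \sum_(b <- [seq b <- r | sval u b != 0]) push a (sval u b).
  rewrite big_filter [RHS]big_mkcond /=; apply: eq_bigr => b _.
  by case: eqP => // ->; rewrite push0.
move=> us hs; rewrite /fam_eval nz_sum [RHS]nz_sum; apply/perm_big/uniq_perm.
- exact/filter_uniq/fam_supp_uniq.
- exact: filter_uniq.
move=> b; rewrite !mem_filter; case: eqP => //= /eqP nz.
by rewrite (mem_fam_supp nz) hs.
Qed.

Lemma smap_push a c (hac : le a c) b (m : M b) : le b a -> smap M hac (push a m) = push c m.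
Proof. by move=> hba; rewrite -(pushE hac) push_comp. Qed.

Lemma fam_eval_linear a c (x y : fam M a) :
  fam_eval (c *: x + y) = c *: fam_eval x + fam_eval y.
Proof.
pose s := undup (fam_supp (c *: x + y) ++ fam_supp x ++ fam_supp y).
have sE (u : fam M a) : {subset fam_supp u <= s} ->
    fam_eval u = \sum_(b <- s) push a (sval u b).
  by move=> us; apply: fam_evalE (undup_uniq _) _ => b /mem_fam_supp /us.
have [sz sx sy] : [/\ {subset fam_supp (c *: x + y) <= s},
    {subset fam_supp x <= s} & {subset fam_supp y <= s}].
  by split=> b hb; rewrite mem_undup !mem_cat hb ?orbT.
rewrite (sE _ sz) (sE _ sx) (sE _ sy) scaler_sumr -big_split.
by apply: eq_bigr => b _; rewrite push_linear.
Qed.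

Lemma fam_eval_incl a c (hac : le a c) (x : fam M a) :
  fam_eval (fam_incl hac x) = smap M hac (fam_eval x).
Proof.
have xsupp b : sval (fam_incl hac x) b != 0 -> b \in fam_supp x := @mem_fam_supp _ _ _ _ _ x b.
rewrite (fam_evalE (fam_supp_uniq x) xsupp) /fam_eval (linear_law_sum (smap_linear hac)); apply: eq_bigr => b _ /=.
have [->|nz] := eqVneq (sval x b) 0; first by rewrite !push0 (linear_law0 (smap_linear hac)).
by rewrite smap_push // (fam_supp_le nz).
Qed.

Definition fam_eval_phom : phom fam_pmod M :=
  @PHom R P le fam_pmod M fam_eval fam_eval_linear fam_eval_incl.

Definition fam_single a (y : M a) : forall b, M b := fun b =>
  match a =P b with ReflectT e => eq_rect a (fun d => M d) y b e | ReflectF _ => 0 end.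

Lemma fam_single_self a (y : M a) : fam_single y a = y.
Proof. by rewrite /fam_single; case: eqP => [e|//]; rewrite (eq_irrelevance e erefl). Qed.

Lemma fam_single_other a (y : M a) b : b != a -> fam_single y b = 0.
Proof. by move=> nba; rewrite /fam_single; case: eqP => // e; rewrite e eqxx in nba. Qed.

Lemma fin_supp_below_single a (y : M a) : fin_supp_below M a (fam_single y).
Proof.
exists [:: a] => b; have [->|nba] := eqVneq b a; first by rewrite mem_head le_refl.
by rewrite fam_single_other ?eqxx.
Qed.

Lemma fam_eval_surj a (y : M a) : exists u : fam_pmod a, fam_eval_phom a u = y.
Proof.
exists (exist _ _ (fin_supp_below_single y)) => /=.
rewrite (@fam_evalE _ _ [:: a]) //=.
  by rewrite big_seq1 fam_single_self (pushE (le_refl a)) smap_id.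
by move=> b; have [->|nba] := eqVneq b a; rewrite ?mem_head // fam_single_other ?eqxx.
Qed.

Definition id_phom : phom M M :=
  @PHom R P le M M (fun a y => y) (fun _ _ _ _ => erefl) (fun _ _ _ _ => erefl).

Lemma projective_fam_section : graded_projective M ->
  exists h : phom M fam_pmod, forall a (y : M a), fam_eval (h a y) = y.
Proof.
by move=> Mproj; have [h hK] := Mproj _ _ fam_eval_phom id_phom fam_eval_surj; exists h.
Qed.

End FreeCover.

Lemma In_nth (T : Type) (x0 : T) (s : seq T) i : (i < size s)%N -> List.In (nth x0 s i) s.
Proof. by elim: s i => [//|x s IHs] [|i] /= lti; [left | right; apply: IHs]. Qed.

Lemma ltn_count_sub (T : eqType) (p q : pred T) (s : seq T) x :
  subpred p q -> x \in s -> q x -> ~~ p x -> (count p s < count q s)%N.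
Proof.
move=> pq; elim: s => [//|y s IHs]; rewrite inE => /orP[/eqP <-|xs] qx npx /=.
  by rewrite qx (negbTE npx) add0n add1n ltnS; apply: sub_count.
by rewrite -addnS; apply: leq_add (IHs xs qx npx); case: (boolP (p y)) => // /pq ->.
Qed.

Section Decomposition.
Variables (R : nzRingType) (P : eqType) (le : rel P) (M : pmod R le).
Hypothesis le_anti : forall a b, le a b -> le b a -> a = b.
Hypothesis le_trans : forall a b c, le a b -> le b c -> le a c.

Lemma le_neq_trans a b c : le a b -> le b c -> b != c -> a != c.
Proof. by move=> hab hbc; apply: contraNneq => eac; subst c; rewrite (le_anti hbc hab). Qed.

Definition indec_below (l : P) (s : seq {d : P & M d}) : Prop :=
  forall p, List.In p s -> [/\ le (tag p) l, tag p != l & indecomposable M (tagged p)].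

Definition indec_expansion (l : P) (y : M l) : Prop :=
  exists2 s, indec_below l s & y = \sum_(p <- s) push l (tagged p).

Lemma indec_expansion0 l : indec_expansion (0 : M l).
Proof. by exists [::]; rewrite ?big_nil. Qed.

Lemma indec_expansionD l (y z : M l) :
  indec_expansion y -> indec_expansion z -> indec_expansion (y + z).
Proof.
move=> [s1 hs1 ->] [s2 hs2 ->]; exists (s1 ++ s2); last by rewrite big_cat.
by move=> p /(@List.in_app_or _ s1 s2 p)[/hs1|/hs2].
Qed.

Lemma indec_expansion_sum l (I : Type) (r : seq I) (C : pred I) (F : I -> M l) :
  (forall i, C i -> indec_expansion (F i)) -> indec_expansion (\sum_(i <- r | C i) F i).
Proof.
by move=> hF; apply: (big_ind (@indec_expansion l)); [exact: indec_expansion0 | exact: indec_expansionD |].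
Qed.

Lemma indec_expansion_indec l b (z : M b) :
  le b l -> b != l -> indecomposable M z -> indec_expansion (push l z).
Proof.
move=> hbl nbl iz; exists [:: existT _ b z]; last by rewrite big_seq1.
by move=> p [<-|[]].
Qed.

Lemma indec_expansion_push l b (z : M b) :
  le b l -> b != l -> indec_expansion z -> indec_expansion (push l z).
Proof.
move=> hbl nbl [s hs ->]; exists s.
  move=> p /hs[hpb npb ip]; split=> //; first exact: le_trans hpb hbl.
  exact: le_neq_trans hpb hbl nbl.
rewrite push_sum; elim: s hs => [|p s IHs] hs; first by rewrite !big_nil.
rewrite !big_cons IHs => [|q sq]; last by apply: hs; right.
by have [hpb _ _] := hs p (or_introl erefl); rewrite push_comp.
Qed.

Section Descent.
Variable h : phom M (fam_pmod M le_trans).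
Hypothesis h_section : forall a (y : M a), fam_eval (h a y) = y.
Variables (k : P) (gens : seq (M k)).
Hypothesis gensP : forall y : M k,
  exists c : 'I_(size gens) -> R, y = \sum_(i < size gens) c i *: gens`_i.

Definition section_degrees : seq P := flatten [seq fam_supp (h k g) | g <- gens].

(* Naturality identifies h(y) with h(t^(k-l) y), which is a combination of the
   finitely many h(g), g a generator of M_k. *)
Lemma mem_section_degrees l (hlk : le l k) (y : M l) d :
  sval (h l y) d != 0 -> d \in section_degrees.
Proof.
apply: contraNT => nd; apply/eqP.
have -> : sval (h l y) d = sval (h k (smap M hlk y)) d by rewrite hfun_nat.
have [c ->] := gensP (smap M hlk y).
rewrite (linear_law_sum (hfun_linear h (a:=k))) sval_fam_sum big1 // => i _.
rewrite (linear_lawZ (hfun_linear h (a:=k))) /=.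
suff -> : sval (h k gens`_i) d = 0 by rewrite scaler0.
apply/eqP; apply: contraNT nd => nz; apply/flatten_mapP.
by exists gens`_i; [exact: mem_nth | exact: mem_fam_supp].
Qed.

Lemma section_decomposable l (y : M l) : decomposable M y -> sval (h l y) l = 0.
Proof.
case=> n [q [hle [ys [nq ->]]]].
rewrite (linear_law_sum (hfun_linear h (a:=l))) sval_fam_sum big1 // => i _.
rewrite hfun_nat /=; apply: contraTeq (nq i) => /fam_supp_le hlq.
by rewrite negbK (le_anti (hle i) hlq).
Qed.

Definition degrees_below (l : P) : nat :=
  count (fun d => le d l && (d != l)) section_degrees.

Lemma degrees_below_lt l b :
  le b l -> b != l -> b \in section_degrees -> (degrees_below b < degrees_below l)%N.
Proof.
move=> hbl nbl bS; apply: (ltn_count_sub _ bS); last by rewrite eqxx andbF.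
  by move=> d /andP[hdb ndb]; rewrite (le_trans hdb hbl) (le_neq_trans hdb hbl nbl).
by rewrite hbl nbl.
Qed.

Lemma section_expand l (y : M l) :
  y = \sum_(b <- fam_supp (h l y) | sval (h l y) b != 0) push l (sval (h l y) b).
Proof.
rewrite -{1}(h_section y) /fam_eval [RHS]big_mkcond /=; apply: eq_bigr => b _.
by case: eqP => // ->; rewrite push0.
Qed.

Lemma decomposable_indec_expansion l : le l k -> forall y : M l,
  decomposable M y -> indec_expansion y.
Proof.
have [n ltn] := ubnP (degrees_below l); elim: n l ltn => [//|n IHn] l ltn hlk y hy.
rewrite (section_expand y); apply: indec_expansion_sum => b nz.
have hbl := fam_supp_le nz.
have nbl : b != l by apply: contraNneq nz => ->; rewrite section_decomposable.
have [dz|iz] := pselect (decomposable M (sval (h l y) b)).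
  apply: indec_expansion_push => //; apply: IHn dz; last exact: le_trans hbl hlk.
  exact: leq_trans (degrees_below_lt hbl nbl (mem_section_degrees hlk nz)) ltn.
exact: indec_expansion_indec.
Qed.

End Descent.

End Decomposition.

Lemma indec_expansion_indexed (R : nzRingType) (P : eqType) (le : rel P) (M : pmod R le)
    (k : P) (x : M k) :
  indec_expansion x ->
  exists (n : nat) (l : 'I_n -> P) (hle : forall i, le (l i) k) (xs : forall i, M (l i)),
    [/\ (forall i, l i != k),
        (forall i, indecomposable M (xs i))
      & x = \sum_(i < n) smap M (hle i) (xs i)].
Proof.
move=> [s hs ->]; pose x0 := existT (fun d => M d) k 0.
have hsi (i : 'I_(size s)) := hs _ (In_nth x0 (ltn_ord i)).
exists (size s), (fun i => tag (nth x0 s i)), (fun i => let: And3 hle _ _ := hsi i in hle),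
  (fun i => tagged (nth x0 s i)); split=> [i|i|]; try by case: (hsi i).
rewrite (big_nth x0) big_mkord; apply: eq_bigr => i _; case: (hsi i) => hle _ _.
exact: pushE.
Qed.

Theorem lemma4p5 (R : idomainType) (P : zmodType) (le : rel P) (M : pmod R le) :
  PID R ->
  lattice_ordered_group le ->
  graded_projective M ->
  (forall a : P, fin_gen (M a)) ->
  forall (k : P) (x : M k), decomposable M x ->
  exists (n : nat) (l : 'I_n -> P) (hle : forall i, le (l i) k) (xs : forall i, M (l i)),
    [/\ (forall i, l i != k),
        (forall i, indecomposable M (xs i))
      & x = \sum_(i < n) smap M (hle i) (xs i)].
Proof.
move=> _ [le_refl [le_anti [le_trans _]]] Mproj Mfg k x xdec.
have [h h_section] := projective_fam_section le_refl le_trans Mproj.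
have [gens gensP] := Mfg k.
apply: indec_expansion_indexed.
exact: (decomposable_indec_expansion le_anti h_section gensP (le_refl k) xdec).
Qed.
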